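(* Let $G$ be a finite solvable group and let $N$ be a minimal normal subgroup of $G$ contained in the Frattini subgroup $\Phi(G)$. Let $p$ be the prime dividing $|N|$ and let $K$ be a normal subgroup of $G$ containing $N$. Suppose that $K$ centralizes every chief $p$-factor of $G$ lying between $N$ and $K$, i.e. for all normal subgroups $L<H$ of $G$ with $N\le L<H\le K$ such that $H/L$ is a minimal normal subgroup of $G/L$ of $p$-power order, one has $[K,H]\le L$. Then $K$ centralizes $N$.
   Context: $\Phi(G)$ is the Frattini subgroup of $G$, the intersection of all maximal subgroups of $G$. *)

From mathcomp Require Import all_boot all_fingroup all_solvable.

(* Induction along a chief series of G from N up to K shows that K/N has a
   normal p-complement T/N with T normal in G: the p-factors are centralized
   by K by hypothesis, and the p'-factors are absorbed by a Hall p'-subgroup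
   normalized through the Frattini argument.  A Hall p'-subgroup S of T is
   then normal in G, because G = T N_G(S) = Phi(G) N_G(S); being coprime to
   N it centralizes N, and hence so does T = N S.  Finally a Sylow
   p-subgroup P of K fixes a nontrivial element of the p-group N, so
   C_N(K) = C_N(P) is a nontrivial normal subgroup of G, equal to N by
   minimality. *)

From mathcomp Require Import all_boot all_fingroup all_solvable.

Set Implicit Arguments.
Unset Strict Implicit.
Unset Printing Implicit Defensive.

Local Open Scope group_scope.

Section GeneralFacts.

Variable gT : finGroupType.
Implicit Types (G H K L N P S T X Y A : {group gT}) (pi : nat_pred) (p : nat).

Lemma mul_normal_pHall pi K H P :
  H <| K -> pi.-Hall(K) P -> pi.-nat #|K : H| -> H * P = K.
Proof.
move=> /andP[sHK nHK] hallP piKH.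
have nHP : P \subset 'N(H) := subset_trans (pHall_sub hallP) nHK.
apply/eqP; rewrite eqEsubset mul_subG ?(pHall_sub hallP) //= -quotientSK //.
by rewrite (pHall_id (quotient_pHall nHP hallP)) // /pgroup card_quotient.
Qed.

Lemma coprime_stable_cent A X Y :
    A \subset 'N(X) -> A \subset 'N(Y) -> X \subset 'N(Y) ->
    Y \subset 'C(A) -> [~: X, A] \subset Y ->
    coprime #|Y| #|A| -> solvable Y ->
  X \subset 'C(A).
Proof.
move=> nXA nYA nYX cYA sXAY coYA solY.
have defCXA : 'C_X(A) / Y = X / Y.
  rewrite coprime_norm_quotient_cent //; apply/setIidPl.
  exact: quotient_cents2r.
have : X / Y \subset 'C_X(A) / Y by rewrite defCXA.
rewrite quotientSK // => /subset_trans-> //.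
by rewrite mul_subG ?subsetIr.
Qed.

Lemma Phi_Hall_norm pi G T S :
  solvable T -> T <| G -> pi.-Hall(T) S -> T \subset 'Phi(G) * S ->
  G \subset 'N(S).
Proof.
move=> solT nsTG hallS sTPhiS.
have sSG : S \subset G := subset_trans (pHall_sub hallS) (normal_sub nsTG).
have defG : 'Phi(G) <*> 'N_G(S) = G.
  apply/eqP; rewrite eqEsubset join_subG Phi_sub subsetIl /=.
  rewrite -{1}(Hall_Frattini_arg solT nsTG hallS).
  apply: subset_trans (mulSg _ sTPhiS) _.
  rewrite -mulgA mulSGid ?subsetI ?sSG ?normG //.
  by rewrite mul_subG ?joing_subl ?joing_subr.
by rewrite -{1}(Phi_nongen defG) genGid subsetIr.
Qed.

Lemma Phi_pgroup_cent_p'_factor p G N T :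
    solvable T -> N <| G -> abelian N -> p.-group N -> N \subset 'Phi(G) ->
    T <| G -> N \subset T -> p^'.-nat #|T : N| ->
  T \subset 'C(N).
Proof.
move=> solT nsNG cNN pN sNPhi nsTG sNT p'TN.
have [S hallS] := Hall_exists p^' solT; have [sST p'S _] := and3P hallS.
have nNT := subset_trans (normal_sub nsTG) (normal_norm nsNG).
have defT : N * S = T by apply: mul_normal_pHall hallS p'TN; rewrite /normal sNT.
have nSG : G \subset 'N(S) by apply: Phi_Hall_norm solT nsTG hallS _; rewrite -defT mulSg.
have sSG := subset_trans sST (normal_sub nsTG).
have cSN : S \subset 'C(N).
  rewrite centsC; apply/commG1P/trivgP.
  rewrite -(coprime_TIg (pnat_coprime pN p'S)) commg_subI // subsetI subxx.
    exact: subset_trans (normal_sub nsNG) nSG.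
  exact: subset_trans sSG (normal_norm nsNG).
by rewrite -defT mul_subG.
Qed.

Lemma pgroup_cent_nontriv p P X :
  p.-group P -> p.-group X -> P \subset 'N(X) -> X :!=: 1 -> 'C_X(P) :!=: 1.
Proof.
move=> pP pX nXP ntX.
have := nontrivial_gacent_pgroup (to := 'J) pP pX _ ntX.
by rewrite gacentJ; apply; split; rewrite ?astabsJ ?subsetT.
Qed.

Lemma minnormal_cent G N K :
  minnormal N G -> G \subset 'N(K) -> 'C_N(K) :!=: 1 -> K \subset 'C(N).
Proof.
move=> /mingroupP[/andP[_ nNG] minN] nKG ntCNK.
have defCNK : 'C_N(K) = N.
  by apply: minN; rewrite ?subsetIl //= ntCNK normsI ?norms_cent.
by rewrite centsC -defCNK subsetIr.
Qed.

Lemma ex_chief_factor_above G N K :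
  G \subset 'N(N) -> K <| G -> N \proper K ->
  exists L, [/\ L <| G, N \subset L, L \proper K & minnormal (K / L) (G / L)].
Proof.
move=> nNG /andP[sKG nKG] ltNK.
pose above_N L := [&& L \proper K, G \subset 'N(L) & N \subset L].
have [L maxL] : {L | [max L | above_N L]}.
  by apply: ex_maxgroup; exists N; rewrite /above_N ltNK nNG subxx.
case/maxgroupP: maxL => /and3P[ltLK nLG sNL] maxL'.
have sLG := subset_trans (proper_sub ltLK) sKG.
exists L; split; rewrite /normal ?sLG //.
apply: maxnormal_minnormal => //; first exact: subset_trans sKG nLG.
apply/maxgroupP; split; first by rewrite /= ltLK.
move=> M /andP[ltMK nMG] sLM; apply: maxL' => //.
by rewrite /above_N ltMK nMG (subset_trans sNL).
Qed.

End GeneralFacts.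

Section PNilpotentAboveN.

Variables (gT : finGroupType) (G N K0 : {group gT}) (p : nat).
Hypotheses (solG : solvable G) (nsNG : N <| G) (nsK0G : K0 <| G).
Hypothesis centK0 : forall L H : {group gT},
  L <| G -> H <| G -> N \subset L -> L \proper H -> H \subset K0 ->
  minnormal (H / L) (G / L) -> p.-group (H / L) ->
  [~: K0, H] \subset L.

Definition normal_p_complement_over (K T : {group gT}) :=
  [/\ T <| G, N \subset T, T \subset K, p^'.-nat #|T : N| & p.-nat #|K : T|].

(* Every p'-subgroup of K0 centralizes K/T: this strengthening of the
   induction is what lets coprime action cross the p-factors. *)
Definition p'_cent_factor (K T : {group gT}) :=
  forall A : {group gT}, A \subset K0 -> p^'.-group A -> [~: K, A] \subset T.

Let sK0G := normal_sub nsK0G.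

Lemma p_chief_factor_step (L K T : {group gT}) :
    L <| G -> K <| G -> N \subset L -> L \proper K -> K \subset K0 ->
    minnormal (K / L) (G / L) -> p.-group (K / L) ->
    normal_p_complement_over L T -> p'_cent_factor L T ->
  normal_p_complement_over K T /\ p'_cent_factor K T.
Proof.
move=> nsLG nsKG sNL ltLK sKK0 minKL pKL [nsTG sNT sTL p'TN pLT] cLT.
have [sKG nKG] := andP nsKG; have sLK := proper_sub ltLK; have nLG := normal_norm nsLG.
have nTG := normal_norm nsTG.
have nTK := subset_trans sKG nTG; have nTL := subset_trans (normal_sub nsLG) nTG.
split.
  split=> //; first exact: subset_trans sLK.
  by rewrite -(Lagrange_index sLK sTL) pnatM pLT andbT -card_quotient // (subset_trans sKG nLG).
move=> A sAK0 p'A; have sAG := subset_trans sAK0 sK0G.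
have nTA := subset_trans sAG nTG.
have sKAL : [~: K, A] \subset L.
  rewrite (subset_trans (commgS K sAK0)) // commGC.
  exact: centK0 nsLG nsKG sNL ltLK sKK0 minKL pKL.
rewrite -quotient_cents2 //; apply: (coprime_stable_cent (Y := (L / T)%G)).
- by rewrite quotient_norms // (subset_trans sAG nKG).
- by rewrite quotient_norms // (subset_trans sAG nLG).
- by rewrite quotient_norms // (subset_trans sKG nLG).
- exact: quotient_cents2r (cLT A sAK0 p'A).
- by rewrite -quotientR // quotientS.
- by rewrite (pnat_coprime _ (quotient_pgroup _ p'A)) // card_quotient.
- exact: quotient_sol (solvableS (normal_sub nsLG) solG).
Qed.

Lemma p'_chief_factor_step (L K T : {group gT}) :
    L <| G -> K <| G -> L \subset K -> K \subset K0 -> p^'.-nat #|K : L| ->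
    normal_p_complement_over L T -> p'_cent_factor L T ->
  exists2 T' : {group gT},
    normal_p_complement_over K T' & p'_cent_factor K T'.
Proof.
move=> nsLG nsKG sLK sKK0 p'KL [nsTG sNT sTL p'TN _] cLT.
have [sKG nKG] := andP nsKG; have [sLG nLG] := andP nsLG.
have nTG := normal_norm nsTG; have nTL := subset_trans sLG nTG.
have solK := solvableS sKG solG.
have [H hallH] := Hall_exists p^' solK.
have [sHK p'H pKH] := and3P hallH.
have sHG := subset_trans sHK sKG; have nTH := subset_trans sHG nTG.
have defK : L * H = K.
  by apply: mul_normal_pHall hallH p'KL; rewrite /normal sLK (subset_trans sKG nLG).
have nTH_L : L \subset 'N(T <*> H).
  rewrite -quotientYK // norm_quotient_pre // cents_norm // quotient_cents2r //.
  by rewrite (cLT H (subset_trans sHK sKK0) p'H).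
have nTH_G : G \subset 'N(T <*> H).
  rewrite -(Hall_Frattini_arg solK nsKG hallH) -defK -mulgA.
  rewrite mul_subG ?mul_subG ?(subset_trans (joing_subr T H) (normG _)) //.
  by rewrite normsY ?subsetIr // (subset_trans (subsetIl _ _) nTG).
exists (T <*> H)%G; first split.
- by rewrite /normal join_subG (normal_sub nsTG) sHG nTH_G.
- exact: subset_trans sNT (joing_subl _ _).
- by rewrite join_subG sHK (subset_trans sTL sLK).
- rewrite -(Lagrange_index (joing_subl T H) sNT) pnatM p'TN andbT.
  rewrite -card_quotient ?join_subG ?normG // quotientYidl //.
  exact: quotient_pgroup.
- by rewrite (pnat_dvd (indexgS K (joing_subr T H))) // -pnatNK.
move=> A sAK0 p'A; have nTHA := subset_trans (subset_trans sAK0 sK0G) nTH_G.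
rewrite -quotient_cents2 ?(subset_trans sKG nTH_G) // -defK quotientMl //.
rewrite mul_subG ?quotient_cents2r //.
  exact: subset_trans (cLT A sAK0 p'A) (joing_subl _ _).
by rewrite (subset_trans (commSg A (joing_subr T H))) // commg_subl.
Qed.

Lemma ex_normal_p_complement_over (K : {group gT}) :
    K <| G -> N \subset K -> K \subset K0 ->
  exists2 T : {group gT}, normal_p_complement_over K T & p'_cent_factor K T.
Proof.
have [n leKn] := ubnP #|K|; elim: n K leKn => // n IH K leKn nsKG sNK sKK0.
have [-> | neKN] := eqVneq K N.
  exists N; first by split; rewrite ?indexgg ?pnat1.
  move=> A sAK0 _; rewrite commg_subl (subset_trans sAK0) //.
  exact: subset_trans sK0G (normal_norm nsNG).
have ltNK : N \proper K by rewrite properEneq eq_sym neKN.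
have [L [nsLG sNL ltLK minKL]] :=
  ex_chief_factor_above (normal_norm nsNG) nsKG ltNK.
have sLK := proper_sub ltLK.
have ltLn : #|L| < n by apply: leq_trans (proper_card ltLK) _; rewrite -ltnS.
have [T LT cLT] := IH L ltLn nsLG sNL (subset_trans sLK sKK0).
have [_ _ /is_abelemP[q _ /abelem_pgroup qKL]] :=
  minnormal_solvable minKL (quotientS L (normal_sub nsKG)) (quotient_sol L solG).
have [eq_qp | neq_qp] := eqVneq q p.
  rewrite eq_qp in qKL.
  by exists T; have [] := p_chief_factor_step nsLG nsKG sNL ltLK sKK0 minKL qKL LT cLT.
apply: p'_chief_factor_step LT cLT => //.
rewrite -card_quotient ?(subset_trans (normal_sub nsKG) (normal_norm nsLG)) //.
by apply: sub_in_pnat qKL => r _; rewrite !inE => /eqP->.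
Qed.

End PNilpotentAboveN.

Theorem lemma5p2 (gT : finGroupType) (G N K : {group gT}) (p : nat) :
  solvable G ->
  N <| G -> minnormal N G ->
  N \subset 'Phi(G) ->
  prime p -> p %| #|N| ->
  K <| G -> N \subset K ->
  (forall L H : {group gT},
      L <| G -> H <| G -> N \subset L -> L \proper H -> H \subset K ->
      minnormal (H / L) (G / L) -> p.-group (H / L) ->
      [~: K, H] \subset L) ->
  K \subset 'C(N).
Proof.
move=> solG nsNG minN sNPhi p_pr pN nsKG sNK centK.
have [_ ntN /is_abelemP[r _ abN]] := minnormal_solvable minN (normal_sub nsNG) solG.
have rN := abelem_pgroup abN.
have pNg : p.-group N.
  by move/pgroupP: (rN) => /(_ p p_pr pN); rewrite inE /= => /eqP->.
have [T [nsTG sNT sTK p'TN pKT] _] :=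
  ex_normal_p_complement_over solG nsNG nsKG centK nsKG sNK (subxx K).
have cNT : T \subset 'C(N) := Phi_pgroup_cent_p'_factor
  (solvableS (normal_sub nsTG) solG) nsNG (abelem_abelian abN) pNg sNPhi nsTG sNT p'TN.
have [P sylP] := Sylow_exists p K.
have defK : T * P = K.
  apply: mul_normal_pHall sylP pKT.
  by rewrite /normal sTK (subset_trans (normal_sub nsKG) (normal_norm nsTG)).
have nNP : P \subset 'N(N).
  exact: subset_trans (pHall_sub sylP) (subset_trans (normal_sub nsKG) (normal_norm nsNG)).
apply: minnormal_cent minN (normal_norm nsKG) _.
have cTN : N \subset 'C(T) by rewrite centsC.
rewrite -defK centM setIA (setIidPl cTN).
exact: pgroup_cent_nontriv (pHall_pgroup sylP) pNg nNP ntN.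
Qed.
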